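(* Let $d \geq 4$ be an integer and for a positive integer $m$ let $\omega_m := e^{2\pi i/m}$. Define vectors in $\mathbb{C}^d$ by $$v_1 := \Big(\tfrac{1}{\sqrt 2}, \tfrac{1}{\sqrt{2d-2}}, \ldots, \tfrac{1}{\sqrt{2d-2}}\Big)^T,\qquad v_2 := \Big(\tfrac{1}{\sqrt 2}, \tfrac{-1}{\sqrt{2d-2}}, \ldots, \tfrac{-1}{\sqrt{2d-2}}\Big)^T,$$ and, for $j = 1, \ldots, d-2$, $$v_{j+2} := \tfrac{1}{\sqrt{d-1}}\big(0, \omega_{d-1}^{0}, \omega_{d-1}^{j}, \omega_{d-1}^{2j}, \ldots, \omega_{d-1}^{(d-2)j}\big)^T.$$ Set $\lambda_1 := 1$, $\lambda_2 := -1$, $\lambda_{j+2} := \omega_{d-2}^j$ for $j = 1,\ldots,d-2$, and $U := \sum_{j=1}^d \lambda_j v_j v_j^*$. Then $U$ is a unitary $d\times d$ matrix, every diagonal entry of $U$ equals $0$, and every off-diagonal entry of $U$ is nonzero. *)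

(* complex numbers are modelled by algC (algebraic complex numbers). *)
From HB Require Import structures.
From mathcomp Require Import all_boot all_order all_algebra all_field.
From mathcomp Require Import sesquilinear spectral.
Set Implicit Arguments. Unset Strict Implicit. Unset Printing Implicit Defensive.
Import Order.TTheory GRing.Theory Num.Theory.
Local Open Scope ring_scope.

(* omega m = e^{2 pi i / m}.  In algC, m.-root (-1) is the m-th root of -1
   with minimal non-negative argument, i.e. e^{i pi / m} (for m >= 1);
   its square is e^{2 pi i / m}. *)
Definition omega (m : nat) : algC := (m.-root (-1)) ^+ 2.

(* Vectors v_1, ..., v_d as column vectors, indexed 0-based:
   vvec d 0 = v_1, vvec d 1 = v_2, vvec d (j+1) = v_{j+2} for j = 1..d-2.
   Coordinates are also 0-based: coordinate k (0 <= k < d) is the (k+1)-th entry. *)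
Definition vvec (d : nat) (i : 'I_d) : 'cV[algC]_d :=
  \col_(k < d)
    if (i : nat) == 0%N then
      (if (k : nat) == 0%N then (sqrtC 2)^-1 else (sqrtC (2 * d%:R - 2))^-1)
    else if (i : nat) == 1%N then
      (if (k : nat) == 0%N then (sqrtC 2)^-1 else - (sqrtC (2 * d%:R - 2))^-1)
    else
      (if (k : nat) == 0%N then 0
       else (sqrtC ((d - 1)%:R))^-1 * omega (d - 1) ^+ (((k : nat) - 1) * ((i : nat) - 1))).

Definition lam (d : nat) (i : 'I_d) : algC :=
  if (i : nat) == 0%N then 1
  else if (i : nat) == 1%N then -1
  else omega (d - 2) ^+ ((i : nat) - 1).

Definition Umx (d : nat) : 'M[algC]_d :=
  \sum_(i < d) lam i *: (vvec i *m (map_mx Num.conj (vvec i))^T).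

(* Everything rests on one arithmetic fact: omega m = (m.-root (-1)) ^+ 2 is a
   primitive m-th root of unity.  As algC carries no trigonometry, this is
   proved geometrically: the N-th root of unity b != 1 of largest real part is
   primitive (rotating any root in the upper half-plane clockwise by b
   increases its real part until it reaches 1), and m.-root (-1) is such a
   maximiser for N = 2m.

   With primitivity available, the orthogonality relations of roots of unity
   show that v_1, ..., v_d are orthonormal, so U = V D V^* is a product of
   unitary matrices.  The entries of U are then computed in closed form: off
   the corner, the first row and column equal 2 alpha beta != 0, and the
   lower-right block is a geometric sum gamma^2 (x + ... + x^(d-2)), which
   vanishes exactly on the diagonal. *)

From HB Require Import structures.
From mathcomp Require Import all_boot all_order all_algebra all_field.
From mathcomp Require Import sesquilinear spectral.
From mathcomp Require Import ring lra.

Set Implicit Arguments.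
Unset Strict Implicit.
Unset Printing Implicit Defensive.

Import Order.TTheory GRing.Theory Num.Theory.
Local Open Scope ring_scope.

Lemma norm_unity_root (N : nat) (y : algC) : (0 < N)%N -> y ^+ N = 1 -> `|y| = 1.
Proof.
move=> N_gt0 yN; apply/eqP; rewrite -(@pexpr_eq1 _ _ N) ?normr_ge0 //.
by rewrite -normrX yN normr1.
Qed.

Lemma conj_unity_rootK (N : nat) (y : algC) : (0 < N)%N -> y ^+ N = 1 -> y^* * y = 1.
Proof. by move=> N_gt0 yN; rewrite mulrC -normCK (norm_unity_root N_gt0 yN) expr1n. Qed.

Lemma Re_lt1 (a : algC) : `|a| = 1 -> a != 1 -> 'Re a < 1.
Proof.
move=> a_norm a_neq1; have := leif_Re_Creal a; rewrite a_norm => /leifP.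
by case: ifP => // a_ge0; rewrite -a_norm ger0_norm ?eqxx in a_neq1.
Qed.

(* The key planar inequality, in coordinates w = x + i t and a = c + i s on
   the unit circle: if both lie in the closed upper half-plane, a != 1 and
   arg a <= arg w (i.e. x <= c), then rotating w clockwise by arg a keeps it
   in the upper half-plane and strictly increases its real part. *)
Lemma rotate_back_real (R : realFieldType) (x t c s : R) :
  x ^+ 2 + t ^+ 2 = 1 -> c ^+ 2 + s ^+ 2 = 1 -> 0 <= t -> 0 <= s -> x <= c -> c < 1 ->
  x < x * c + t * s /\ 0 <= c * t - x * s.
Proof.
move=> wt cs t_ge0 s_ge0 xc c_lt1; split.
  have [x_lt0|x_gt0|x0] := ltrgtP x 0.
  - have : 0 < (c - 1) * x by nra.
    have : 0 <= s * t by nra.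
    lra.
  - have s_le_t : s <= t.
      have : s ^+ 2 <= t ^+ 2 by nra.
      nra.
    nra.
  - rewrite x0 in wt xc *.
    have -> : t = 1 by nra.
    nra.
have [x_le0|x_gt0] := lerP x 0.
  have [c_ge0|c_lt0] := lerP 0 c; first nra.
  have : t <= s by nra.
  nra.
have : s <= t by nra.
nra.
Qed.

(* The same statement for algebraic complex numbers, transported through the
   real closed field algR of real algebraic numbers. *)
Lemma rotate_back (w a : algC) : `|w| = 1 -> `|a| = 1 -> 0 <= 'Im w -> 0 <= 'Im a ->
  'Re w <= 'Re a -> 'Re a < 1 -> 'Re w < 'Re (w * a^*) /\ 0 <= 'Im (w * a^*).
Proof.
move=> w_norm a_norm Iw_ge0 Ia_ge0 wa a_lt1.
rewrite ReM ImM Re_conj Im_conj mulrN opprK mulrN [- _ + _]addrC.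
pose r (z : algC) (Rz : z \is Num.real) : algR := in_algR Rz.
have on_circle (z : algC) : `|z| = 1 -> r _ (Creal_Re z) ^+ 2 + r _ (Creal_Im z) ^+ 2 = 1.
  by move=> zn; apply: val_inj; rewrite /= -normC2_Re_Im zn expr1n.
exact: (rotate_back_real (on_circle w w_norm) (on_circle a a_norm) Iw_ge0 Ia_ge0 wa a_lt1).
Qed.

(* Let a != 1 be an N-th root of unity with Im a >= 0 and y an N-th root of
   unity with Im y >= 0.  Some y * a^* ^+ j, j < N, has real part > Re a:
   otherwise each step j -> j+1 is a rotation as in rotate_back, so the real
   parts increase strictly along the walk, yet the walk returns to y at j = N. *)
Lemma rotation_walk (N : nat) (a y : algC) : (0 < N)%N -> a ^+ N = 1 -> a != 1 ->
  0 <= 'Im a -> y ^+ N = 1 -> 0 <= 'Im y ->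
  exists2 j, (j < N)%N & 'Re a < 'Re (y * a^* ^+ j).
Proof.
move=> N_gt0 aN a_neq1 Ia_ge0 yN Iy_ge0.
have a_norm := norm_unity_root N_gt0 aN.
pose w j := y * a^* ^+ j.
have w_norm j : `|w j| = 1.
  by rewrite normrM normrX norm_conjC a_norm expr1n mulr1 (norm_unity_root N_gt0 yN).
case: (boolP [exists j : 'I_N, 'Re a < 'Re (w j)]) => [/existsP[j lt_aw] | /existsPn none].
  by exists j.
have le_wa j : (j < N)%N -> 'Re (w j) <= 'Re a.
  by move=> jN; rewrite real_leNgt ?Creal_Re // (none (Ordinal jN)).
have step j : (j < N)%N -> 0 <= 'Im (w j) -> 'Re (w j) < 'Re (w j.+1) /\ 0 <= 'Im (w j.+1).
  move=> jN Iw; rewrite /w exprSr mulrA.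
  exact: rotate_back (w_norm j) a_norm Iw Ia_ge0 (le_wa j jN) (Re_lt1 a_norm a_neq1).
have walk j : (j < N)%N -> 0 <= 'Im (w j) /\ 'Re y <= 'Re (w j).
  elim: j => [|j IH] jN; first by rewrite /w expr0 mulr1.
  have [Iw le_yw] := IH (ltnW jN).
  have [lt_w Iw'] := step j (ltnW jN) Iw.
  by split=> //; apply: le_trans le_yw (ltW lt_w).
have last_N : (N.-1 < N)%N by rewrite ltn_predL.
have [Iw le_yw] := walk _ last_N.
have [lt_w _] := step _ last_N Iw.
have := le_lt_trans le_yw lt_w.
by rewrite prednK // /w -rmorphXn aN rmorph1 mulr1 ltxx.
Qed.

(* An N-th root of unity b != 1 whose real part is maximal among the N-th roots
   of unity other than 1 is primitive: up to conjugation Im b >= 0, and then by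
   rotation_walk every N-th root of unity in the upper half-plane, in
   particular some primitive one, is a power of b. *)
Lemma max_Re_unity_root_prim (N : nat) (b : algC) : (1 < N)%N -> b ^+ N = 1 -> b != 1 ->
  (forall y, y ^+ N = 1 -> y != 1 -> 'Re y <= 'Re b) -> N.-primitive_root b.
Proof.
move=> N_gt1; have N_gt0 := ltnW N_gt1.
wlog Ib_ge0 : b / 0 <= 'Im b.
  move=> prim_upper bN b_neq1 b_max.
  case/orP: (real_leVge (real0 _) (Creal_Im b)); first by move=> Ib; apply: prim_upper.
  move=> Ib; rewrite -(fmorph_primitive_root Num.conj).
  apply: prim_upper; rewrite ?Im_conj ?oppr_ge0 ?fmorph_eq1 ?Re_conj //.
  by rewrite -rmorphXn bN rmorph1.
move=> bN b_neq1 b_max.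
have upper_pow y : y ^+ N = 1 -> 0 <= 'Im y -> exists j, y = b ^+ j.
  move=> yN Iy; have [j _ lt_bw] := rotation_walk N_gt0 bN b_neq1 Ib_ge0 yN Iy.
  have wN : (y * b^* ^+ j) ^+ N = 1.
    by rewrite exprMn exprAC -rmorphXn bN rmorph1 expr1n mulr1 yN.
  have w1 : y * b^* ^+ j = 1.
    apply/eqP; apply: contraLR lt_bw => w_neq1.
    by rewrite -real_leNgt ?Creal_Re //; exact: b_max.
  exists j; rewrite -[y]mulr1 -(expr1n _ j) -(conj_unity_rootK N_gt0 bN).
  by rewrite exprMn mulrA w1 mul1r.
have [P P_prim IP_ge0] : exists2 P : algC, N.-primitive_root P & 0 <= 'Im P.
  have [P P_prim] := C_prim_root_exists N_gt0.
  case/orP: (real_leVge (real0 _) (Creal_Im P)) => IP; first by exists P.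
  by exists P^*; rewrite ?fmorph_primitive_root // Im_conj oppr_ge0.
have [k P_eq] := upper_pow P (prim_expr_order P_prim) IP_ge0.
have [m b_prim m_dvdN] := prim_order_exists N_gt0 bN.
suff -> : N = m by [].
apply/eqP; rewrite eqn_dvd m_dvdN andbT (prim_order_dvd P_prim) P_eq.
by rewrite exprAC (prim_expr_order b_prim) expr1n.
Qed.

(* Such a maximiser exists: there are finitely many N-th roots of unity. *)
Lemma exists_max_Re_unity_root (N : nat) : (1 < N)%N ->
  exists b : algC, [/\ b ^+ N = 1, b != 1 &
    forall y, y ^+ N = 1 -> y != 1 -> 'Re y <= 'Re b].
Proof.
case: N => [|[|n]] // _.
have [P P_prim] := C_prim_root_exists (ltn0Sn n.+1).
pose re (k : 'I_n.+1) : algR := in_algR (Creal_Re (P ^+ k.+1)).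
have [k _ k_max] := @arg_maxP _ _ _ ord0 xpredT re isT.
exists (P ^+ k.+1); split.
- by rewrite exprAC (prim_expr_order P_prim) expr1n.
- by rewrite -(prim_order_dvd P_prim) gtnNdvd // ltnS.
move=> y yN y_neq1; have [[[|i] i_lt] y_eq] := prim_rootP P_prim yN.
  by rewrite y_eq expr0 eqxx in y_neq1.
by rewrite y_eq; exact: (k_max (Ordinal (i_lt : (i < n.+1)%N)) isT).
Qed.

(* For real x, n.-root x has maximal real part among all n-th roots of x
   (the library states this for the roots in the upper half-plane only). *)
Lemma Re_le_rootC (n : nat) (x y : algC) : (0 < n)%N -> x \is Num.real ->
  y ^+ n = x -> 'Re y <= 'Re (n.-root x).
Proof.
move=> n_gt0 x_real yn; case/orP: (real_leVge (real0 _) (Creal_Im y)) => Iy.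
  exact: rootC_Re_max.
rewrite -Re_conj; apply: rootC_Re_max => //; last by rewrite Im_conj oppr_ge0.
by rewrite -rmorphXn yn; apply: conj_Creal.
Qed.

(* Indeed z := m.-root (-1) maximises
   the real part among the roots of -1; the maximiser b of exists_max_Re_unity_root
   for N = 2m is primitive, hence a root of -1, so z also maximises the real part
   among the N-th roots of unity other than 1, hence is primitive, and
   omega m = z ^+ 2 is then a primitive m-th root of unity. *)
Lemma omega_prim (m : nat) : (1 < m)%N -> m.-primitive_root (omega m).
Proof.
move=> m_gt1; have m_gt0 := ltnW m_gt1.
pose z := m.-root (-1 : algC); pose N := (m * 2)%N.
have N_gt1 : (1 < N)%N by rewrite /N (leq_trans m_gt1) // leq_pmulr.
have m_ltN : (m < N)%N by rewrite /N ltn_Pmulr.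
have zm : z ^+ m = -1 := rootCK m_gt0 (-1).
have [b [bN b_neq1 b_max]] := exists_max_Re_unity_root N_gt1.
have b_prim := max_Re_unity_root_prim N_gt1 bN b_neq1 b_max.
have bm : b ^+ m = -1.
  have : (b ^+ m) ^+ 2 == 1 by rewrite -exprM -/N bN.
  by rewrite sqrf_eq1 -(prim_order_dvd b_prim) gtnNdvd //= => /eqP.
have z_prim : N.-primitive_root z.
  apply: max_Re_unity_root_prim => //.
  - by rewrite /N exprM zm sqrrN expr1n.
  - (* z = 1 would force -1 = 1 *)
    by rewrite rootC_eq1 // eq_sym -addr_eq0 -mulr2n mulrn_eq0 oner_eq0.
  move=> y yN y_neq1; apply: le_trans (b_max y yN y_neq1) _.
  by apply: Re_le_rootC m_gt0 _ bm; rewrite rpredN1.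
have := dvdn_prim_root z_prim (dvdn_mulr 2 (dvdnn m)).
by rewrite /N mulKn.
Qed.

Lemma geometric_sum_eq0 (R : idomainType) (x : R) (N : nat) : x != 1 ->
  (\sum_(k < N) x ^+ k == 0) = (x ^+ N == 1).
Proof.
move=> x_neq1; rewrite -[x ^+ N == 1]subr_eq0 subrX1 mulf_eq0 subr_eq0.
by rewrite (negbTE x_neq1).
Qed.

Section PrimitiveRootSums.
Variables (N : nat) (z : algC).
Hypothesis z_prim : N.-primitive_root z.

Lemma prim_root_powN (a : nat) : (z ^+ a) ^+ N = 1.
Proof. by rewrite exprAC (prim_expr_order z_prim) expr1n. Qed.

Lemma prim_root_powK (a : nat) : (z ^+ a)^* * z ^+ a = 1.
Proof. exact: conj_unity_rootK (prim_order_gt0 z_prim) (prim_root_powN a). Qed.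

Lemma sum_prim_root_pow (a : nat) : (0 < a < N)%N -> \sum_(k < N) z ^+ (k * a) = 0.
Proof.
case/andP=> a_gt0 a_ltN; under eq_bigr do rewrite mulnC exprM.
apply/eqP; rewrite geometric_sum_eq0 ?prim_root_powN //.
by rewrite -(prim_order_dvd z_prim) gtnNdvd.
Qed.

Lemma prim_root_pow_conjN (a b : nat) : ((z ^+ a)^* * z ^+ b) ^+ N = 1.
Proof. by rewrite exprMn -rmorphXn !prim_root_powN rmorph1 mulr1. Qed.

Lemma prim_root_pow_conj_eq1 (a b : nat) : (a < N)%N -> (b < N)%N ->
  ((z ^+ a)^* * z ^+ b == 1) = (a == b).
Proof.
move=> a_ltN b_ltN; apply/eqP/eqP => [u1|<-]; last exact: prim_root_powK.
have : z ^+ b = z ^+ a.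
  by rewrite -[z ^+ b]mul1r -(prim_root_powK a) [_^* * _]mulrC -mulrA u1 mulr1.
by move/eqP; rewrite (eq_prim_root_expr z_prim) !modn_small // => /eqP.
Qed.

Lemma sum_prim_root_pow_conj (a b : nat) : (a < N)%N -> (b < N)%N ->
  \sum_(k < N) (z ^+ (k * a))^* * z ^+ (k * b) = (a == b)%:R * N%:R.
Proof.
move=> a_ltN b_ltN.
under eq_bigr => k _ do rewrite mulnC [(k * b)%N]mulnC !exprM rmorphXn -exprMn.
have [<-|a_neq_b] := eqVneq a b.
  under eq_bigr => k _ do rewrite prim_root_powK expr1n.
  by rewrite sumr_const card_ord mul1r.
rewrite mul0r; apply/eqP; rewrite geometric_sum_eq0 ?prim_root_pow_conjN //.
by rewrite prim_root_pow_conj_eq1.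
Qed.

End PrimitiveRootSums.

Definition ventry (d i k : nat) : algC :=
  if i == 0%N then
    (if k == 0%N then (sqrtC 2)^-1 else (sqrtC (2 * d%:R - 2))^-1)
  else if i == 1%N then
    (if k == 0%N then (sqrtC 2)^-1 else - (sqrtC (2 * d%:R - 2))^-1)
  else
    (if k == 0%N then 0
     else (sqrtC ((d - 1)%:R))^-1 * omega (d - 1) ^+ ((k - 1) * (i - 1))).

Definition eigval (d i : nat) : algC :=
  if i == 0%N then 1 else if i == 1%N then -1 else omega (d - 2) ^+ (i - 1).

(* The normalising constants alpha = 1/sqrt 2, beta n = 1/sqrt(2(d-1)) and
   gamma n = 1/sqrt(d-1), for d = n + 2. *)
Definition alpha : algC := (sqrtC 2)^-1.
Definition beta (n : nat) : algC := (sqrtC (2 * n.+1%:R))^-1.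
Definition gamma (n : nat) : algC := (sqrtC n.+1%:R)^-1.

Section Entries.
Variable n : nat.

Lemma ventry00 : ventry n.+2 0 0 = alpha. Proof. by []. Qed.
Lemma ventry10 : ventry n.+2 1 0 = alpha. Proof. by []. Qed.
Lemma ventryS0 (i : nat) : ventry n.+2 i.+2 0 = 0. Proof. by []. Qed.

Lemma radicand_beta : 2 * n.+2%:R - 2 = 2 * n.+1%:R :> algC.
Proof. by rewrite mulrSr; ring. Qed.

Lemma ventry0S (k : nat) : ventry n.+2 0 k.+1 = beta n.
Proof. by rewrite /ventry /= radicand_beta. Qed.

Lemma ventry1S (k : nat) : ventry n.+2 1 k.+1 = - beta n.
Proof. by rewrite /ventry /= radicand_beta. Qed.

Lemma ventrySS (i k : nat) :
  ventry n.+2 i.+2 k.+1 = gamma n * omega n.+1 ^+ (k * i.+1).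
Proof. by rewrite /ventry /= !subn1. Qed.

Lemma eigval0 : eigval n.+2 0 = 1. Proof. by []. Qed.
Lemma eigval1 : eigval n.+2 1 = -1. Proof. by []. Qed.
Lemma eigvalS (i : nat) : eigval n.+2 i.+2 = omega n ^+ i.+1.
Proof. by rewrite /eigval /= !subSS !subn0. Qed.

End Entries.

Definition ventryE := (ventry00, ventry10, ventryS0, ventry0S, ventry1S, ventrySS).
Definition eigvalE := (eigval0, eigval1, eigvalS).

Lemma inv_sqrtC_real (x : algC) : 0 <= x -> ((sqrtC x)^-1)^* = (sqrtC x)^-1.
Proof. by move=> x_ge0; rewrite conj_Creal // ger0_real // invr_ge0 sqrtC_ge0. Qed.

Lemma conj_alpha : alpha^* = alpha.
Proof. exact: inv_sqrtC_real (ler0n _ 2). Qed.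

Lemma conj_beta (n : nat) : (beta n)^* = beta n.
Proof. by apply: inv_sqrtC_real; rewrite mulr_ge0 ?ler0n. Qed.

Lemma conj_gamma (n : nat) : (gamma n)^* = gamma n.
Proof. exact: inv_sqrtC_real (ler0n _ _). Qed.

Definition conj_constE := (conj_alpha, conj_beta, conj_gamma, rmorph0).

Lemma alpha_sqr : alpha ^+ 2 = 2^-1.
Proof. by rewrite exprVn sqrtCK. Qed.

Lemma beta_sqr (n : nat) : n.+1%:R * beta n ^+ 2 = 2^-1.
Proof.
rewrite exprVn sqrtCK invfM mulrCA mulfV ?mulr1 //.
by rewrite pnatr_eq0.
Qed.

Lemma gamma_sqr (n : nat) : n.+1%:R * gamma n ^+ 2 = 1.
Proof. by rewrite exprVn sqrtCK mulfV // pnatr_eq0. Qed.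

Lemma alpha_neq0 : alpha != 0.
Proof. by rewrite invr_eq0 sqrtC_eq0 pnatr_eq0. Qed.

Lemma beta_neq0 (n : nat) : beta n != 0.
Proof. by rewrite invr_eq0 sqrtC_eq0 mulf_eq0 !pnatr_eq0. Qed.

Lemma gamma_neq0 (n : nat) : gamma n != 0.
Proof. by rewrite invr_eq0 sqrtC_eq0 pnatr_eq0. Qed.

Definition vdot (n i j : nat) : algC :=
  \sum_(k < n.+2) (ventry n.+2 i k)^* * ventry n.+2 j k.

Lemma vdotC (n i j : nat) : (vdot n i j)^* = vdot n j i.
Proof.
rewrite /vdot rmorph_sum; apply: eq_bigr => k _.
by rewrite rmorphM /= conjCK mulrC.
Qed.

Lemma vdot_split (n i j : nat) : vdot n i j =
  (ventry n.+2 i 0)^* * ventry n.+2 j 0 +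
  \sum_(k < n.+1) (ventry n.+2 i k.+1)^* * ventry n.+2 j k.+1.
Proof. by rewrite /vdot big_ord_recl. Qed.

(* The vectors v_1, ..., v_d form an orthonormal basis: the Gram matrix is
   Hermitian, so it suffices to treat i <= j; the first coordinate and the
   constant tails of v_1, v_2 are handled directly, the Fourier tails of the
   v_(j+2) by the orthogonality relations of omega (d-1). *)
Lemma vdot_orthonormal (n i j : nat) : (1 < n)%N -> (i < n.+2)%N -> (j < n.+2)%N ->
  vdot n i j = (i == j)%:R.
Proof.
move=> n_gt1; wlog le_ij : i j / (i <= j)%N.
  move=> orth_le i_lt j_lt; have [le_ij|/ltnW le_ji] := leqP i j.
    exact: orth_le.
  by rewrite -vdotC (orth_le j i) // eq_sym conjC_nat.
have w_prim := omega_prim (ltnW n_gt1 : (1 < n.+1)%N).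
rewrite vdot_split.
case: i j le_ij => [|[|i]] [|[|j]] //= le_ij _ j_lt; rewrite !ventryE !conj_constE.
- under eq_bigr => k _ do rewrite ventry0S conj_beta -expr2.
  rewrite sumr_const card_ord -[_ *+ n.+1]mulr_natl -expr2 alpha_sqr beta_sqr.
  by rewrite [RHS](splitr 1) mul1r.
- under eq_bigr => k _ do rewrite ventry0S ventry1S conj_beta mulrN -expr2.
  rewrite sumrN sumr_const card_ord -[_ *+ n.+1]mulr_natl -expr2 alpha_sqr beta_sqr.
  by rewrite subrr.
- under eq_bigr => k _ do rewrite ventry0S ventrySS conj_beta mulrA.
  by rewrite -mulr_sumr sum_prim_root_pow ?mulr0 ?addr0.
- under eq_bigr => k _ do rewrite ventry1S rmorphN /= conj_beta mulrNN -expr2.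
  rewrite sumr_const card_ord -[_ *+ n.+1]mulr_natl -expr2 alpha_sqr beta_sqr.
  by rewrite [RHS](splitr 1) mul1r.
- under eq_bigr => k _ do rewrite ventry1S ventrySS rmorphN /= conj_beta mulrA.
  by rewrite -mulr_sumr sum_prim_root_pow ?mulr0 ?addr0.
under eq_bigr => k _ do rewrite !ventrySS rmorphM /= conj_gamma mulrACA.
have i_lt : (i.+1 < n.+1)%N := leq_ltn_trans le_ij j_lt.
rewrite -mulr_sumr (sum_prim_root_pow_conj w_prim i_lt (j_lt : (j.+1 < n.+1)%N)).
by rewrite mul0r add0r !eqSS mulrCA -expr2 [_ ^+ 2 * _]mulrC gamma_sqr mulr1.
Qed.

Definition Uentry (n k l : nat) : algC :=
  \sum_(i < n.+2) eigval n.+2 i * (ventry n.+2 i k * (ventry n.+2 i l)^*).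

Lemma UmxE (n : nat) (k l : 'I_n.+2) : Umx n.+2 k l = Uentry n k l.
Proof.
rewrite /Umx summxE; apply: eq_bigr => i _.
by rewrite !mxE big_ord1 !mxE.
Qed.

Lemma Uentry_split (n k l : nat) : Uentry n k l =
  ventry n.+2 0 k * (ventry n.+2 0 l)^* - ventry n.+2 1 k * (ventry n.+2 1 l)^* +
  \sum_(i < n) omega n ^+ i.+1 * (ventry n.+2 i.+2 k * (ventry n.+2 i.+2 l)^*).
Proof.
rewrite /Uentry !big_ord_recl /= addrA eigval0 eigval1 mul1r mulN1r.
by under eq_bigr => i _ do rewrite eigvalS.
Qed.

(* The first row and column: U_00 = alpha^2 - alpha^2 = 0, while the other
   entries are alpha beta - alpha (- beta) = 2 alpha beta. *)
Lemma Uentry00 (n : nat) : Uentry n 0 0 = 0.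
Proof.
rewrite Uentry_split big1 => [|i _]; last by rewrite ventryS0 mul0r mulr0.
by rewrite !ventryE subrr addr0.
Qed.

Lemma Uentry0S (n l : nat) : Uentry n 0 l.+1 = 2 * (alpha * beta n).
Proof.
rewrite Uentry_split big1 => [|i _]; last by rewrite ventryS0 mul0r mulr0.
by rewrite !ventryE rmorphN /= !conj_constE; ring.
Qed.

Lemma UentryS0 (n k : nat) : Uentry n k.+1 0 = 2 * (alpha * beta n).
Proof.
rewrite Uentry_split big1 => [|i _]; last by rewrite ventryS0 rmorph0 !mulr0.
by rewrite !ventryE !conj_constE; ring.
Qed.

(* In the lower-right block the v_1, v_2 contributions cancel and the entry is a
   geometric sum in x = omega (d-2) * (omega (d-1) ^+ l)^* * omega (d-1) ^+ k. *)
Lemma UentrySS (n k l : nat) : Uentry n k.+1 l.+1 =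
  gamma n ^+ 2 * \sum_(i < n) (omega n * ((omega n.+1 ^+ l)^* * omega n.+1 ^+ k)) ^+ i.+1.
Proof.
rewrite Uentry_split !ventryE rmorphN /= !conj_constE mulrNN subrr add0r mulr_sumr.
apply: eq_bigr => i _; rewrite !ventryE rmorphM /= conj_gamma.
move: (omega n) (omega n.+1) => q w.
by rewrite !exprM rmorphXn !exprMn; ring.
Qed.

(* Diagonal entries: for k = l, x = omega (d-2) and the geometric sum vanishes. *)
Lemma Uentry_diag (n k : nat) : (1 < n)%N -> Uentry n k k = 0.
Proof.
move=> n_gt1; case: k => [|k]; first exact: Uentry00.
have w_prim := omega_prim (ltnW n_gt1 : (1 < n.+1)%N).
have q_prim := omega_prim n_gt1.
have sum0 : \sum_(i < n) omega n ^+ i = 0.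
  apply/eqP; rewrite geometric_sum_eq0; first exact/eqP/(prim_expr_order q_prim).
  by rewrite -[omega n]expr1 -(prim_order_dvd q_prim) gtnNdvd.
rewrite UentrySS (prim_root_powK w_prim) mulr1.
under eq_bigr => i _ do rewrite exprS.
by rewrite -mulr_sumr sum0 !mulr0.
Qed.

(* If q is a primitive n-th root of unity and u != 1 an (n+1)-th root of unity,
   then (q u)^n = u^n != 1, so x + x^2 + ... + x^n != 0 for x = q u. *)
Lemma sum_shifted_pow_neq0 (n : nat) (q u : algC) : n.-primitive_root q ->
  u ^+ n.+1 = 1 -> u != 1 -> \sum_(i < n) (q * u) ^+ i.+1 != 0.
Proof.
move=> q_prim un1 u_neq1.
have xn_neq1 : (q * u) ^+ n != 1.
  apply: contra u_neq1 => /eqP xn1.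
  have un : u ^+ n = 1 by rewrite -xn1 exprMn (prim_expr_order q_prim) mul1r.
  by rewrite -[u]mul1r -{1}un -exprSr un1.
have x_neq1 : q * u != 1 by apply: contra xn_neq1 => /eqP ->; rewrite expr1n.
have x_neq0 : q * u != 0.
  rewrite mulf_neq0 //; last by apply: contra u_neq1 => /eqP u0; rewrite -un1 u0 expr0n.
  by rewrite (prim_root_eq0 q_prim) -lt0n (prim_order_gt0 q_prim).
under eq_bigr => i _ do rewrite exprS.
by rewrite -mulr_sumr mulf_neq0 // geometric_sum_eq0.
Qed.

Lemma Uentry_offdiag (n k l : nat) : (1 < n)%N -> (k < n.+2)%N -> (l < n.+2)%N ->
  k != l -> Uentry n k l != 0.
Proof.
move=> n_gt1; have w_prim := omega_prim (ltnW n_gt1 : (1 < n.+1)%N).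
have c_neq0 : 2 * (alpha * beta n) != 0.
  by rewrite !mulf_neq0 ?alpha_neq0 ?beta_neq0 ?pnatr_eq0.
case: k l => [|k] [|l] //= k_lt l_lt k_neq_l; rewrite ?Uentry0S ?UentryS0 //.
rewrite UentrySS mulf_neq0 ?expf_neq0 ?gamma_neq0 //.
apply: sum_shifted_pow_neq0 (omega_prim n_gt1) (prim_root_pow_conjN w_prim l k) _.
by rewrite (prim_root_pow_conj_eq1 w_prim) // eq_sym.
Qed.

(* U = V D V^*, with V the matrix of columns v_i and D = diag(lambda_i). *)
Definition Vmx (n : nat) : 'M[algC]_n.+2 := \matrix_(k, i) ventry n.+2 i k.
Definition Dmx (n : nat) : 'M[algC]_n.+2 := diag_mx (\row_i eigval n.+2 i).

Lemma Umx_decomp (n : nat) : Umx n.+2 = Vmx n *m Dmx n *m map_mx Num.conj (Vmx n)^T.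
Proof.
apply/matrixP => k l; rewrite UmxE !mxE /Dmx mul_mx_diag.
by apply: eq_bigr => i _; rewrite !mxE mulrA [_ * ventry _ _ _]mulrC.
Qed.

Lemma Vmx_unitary (n : nat) : (1 < n)%N -> Vmx n \is unitarymx.
Proof.
move=> n_gt1; apply/unitarymxP/mulmx1C/matrixP => i j.
rewrite !mxE -(vdot_orthonormal n_gt1 (ltn_ord i) (ltn_ord j)).
by apply: eq_bigr => k _; rewrite !mxE.
Qed.

Lemma eigval_conjK (n i : nat) : (1 < n)%N -> eigval n.+2 i * (eigval n.+2 i)^* = 1.
Proof.
move=> n_gt1; case: i => [|[|i]]; rewrite eigvalE.
- by rewrite rmorph1 mulr1.
- by rewrite rmorphN1 mulrNN mulr1.
by rewrite mulrC (prim_root_powK (omega_prim n_gt1)).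
Qed.

Lemma Dmx_unitary (n : nat) : (1 < n)%N -> Dmx n \is unitarymx.
Proof.
move=> n_gt1; apply/unitarymxP/matrixP => i j.
rewrite /Dmx mul_diag_mx !mxE.
have [<-|_] := eqVneq i j; first by rewrite mulr1n eigval_conjK.
by rewrite mulr0n rmorph0 mulr0.
Qed.

Lemma Umx_unitary (n : nat) : (1 < n)%N -> Umx n.+2 \is unitarymx.
Proof.
move=> n_gt1; rewrite Umx_decomp.
apply: mul_unitarymx; first apply: mul_unitarymx.
- exact: Vmx_unitary.
- exact: Dmx_unitary.
by rewrite trmxC_unitary; exact: Vmx_unitary.
Qed.

Theorem mainTheorem7 (d : nat) (hd : (4 <= d)%N) :
  Umx d \is unitarymx /\
  (forall i : 'I_d, Umx d i i = 0) /\
  (forall i j : 'I_d, i != j -> Umx d i j != 0).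
Proof.
case: d hd => [|[|n]] // n_gt1.
split; [|split].
- exact: Umx_unitary.
- by move=> i; rewrite UmxE Uentry_diag.
- by move=> i j i_neq_j; rewrite UmxE Uentry_offdiag.
Qed.
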